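(* Let $\delta\in\mathbb{Z}$ and let $\lambda,\mu$ be bipartitions. (i) $\mu\in\operatorname{Rem}^\bullet(\lambda)$ (equivalently $\lambda\in\operatorname{Add}^\bullet(\mu)$) if and only if the following holds. The labels of $x_\lambda(\delta)$ and $x_\mu(\delta)$ agree at all vertices except for one pair of adjacent vertices $j,j+1$. At that pair, the labels (read at $j$, then at $j+1$) are one of the following four cases: - $x_\mu(\delta)$ is $(\times,\bigcirc)$ and $x_\lambda(\delta)$ is $(\vee,\wedge)$; - $x_\mu(\delta)$ is $(\wedge,\bigcirc)$ and $x_\lambda(\delta)$ is $(\bigcirc,\wedge)$; - $x_\mu(\delta)$ is $(\times,\vee)$ and $x_\lambda(\delta)$ is $(\vee,\times)$; - $x_\mu(\delta)$ is $(\wedge,\vee)$ and $x_\lambda(\delta)$ is $(\bigcirc,\times)$. (ii) $\mu\in\operatorname{Rem}^\circ(\lambda)$ (equivalently $\lambda\in\operatorname{Add}^\circ(\mu)$) if and only if the following holds. The labels of $x_\lambda(\delta)$ and $x_\mu(\delta)$ agree at all vertices except for one pair of adjacent vertices $j,j+1$. At that pair, the labels are one of the following four cases: - $x_\mu(\delta)$ is $(\bigcirc,\times)$ and $x_\lambda(\delta)$ is $(\vee,\wedge)$; - $x_\mu(\delta)$ is $(\bigcirc,\vee)$ and $x_\lambda(\delta)$ is $(\vee,\bigcirc)$; - $x_\mu(\delta)$ is $(\wedge,\times)$ and $x_\lambda(\delta)$ is $(\times,\wedge)$; - $x_\mu(\delta)$ is $(\wedge,\vee)$ and $x_\lambda(\delta)$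 is $(\times,\bigcirc)$.
   Context: A partition is a weakly decreasing sequence $\alpha=(\alpha_1,\alpha_2,\dots)$ of nonnegative integers, almost all zero. A bipartition is a pair $\lambda=(\lambda^\bullet,\lambda^\circ)$ of partitions. $\operatorname{Add}^\bullet(\lambda)$ (resp. $\operatorname{Add}^\circ(\lambda)$) is the set of bipartitions obtained from $\lambda$ by adding one box to the Young diagram of $\lambda^\bullet$ (resp. $\lambda^\circ$). $\operatorname{Rem}^\bullet(\lambda)$ and $\operatorname{Rem}^\circ(\lambda)$ are defined likewise by removing one box. For a parameter $\delta$ and bipartition $\lambda$, set $I_\wedge(\lambda)=\{\lambda^\bullet_i-(i-1): i\ge1\}$ and $I_\vee(\lambda,\delta)=\{i-\delta-\lambda^\circ_i: i\ge1\}$. The weight diagram $x_\lambda(\delta)$ labels each integer vertex $j$ of the number line by: - $\bigcirc$ if $j\notin I_\wedge(\lambda)\cup I_\vee(\lambda,\delta)$; - $\wedge$ if $j\in I_\wedge(\lambda)\setminus I_\vee(\lambda,\delta)$; - $\vee$ if $j\in I_\vee(\lambda,\delta)\setminus I_\wedge(\lambda)$; - $\times$ if $j\in I_\wedge(\lambda)\cap I_\vee(\lambda,\delta)$. *)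

From Stdlib Require Import ZArith ClassicalEpsilon.
Open Scope Z_scope.

(* A partition alpha = (alpha_1, alpha_2, ...) is represented by a function
   a : nat -> nat with a k = alpha_{k+1} (0-based index). *)
Definition is_partition (a : nat -> nat) : Prop :=
  (forall k, (a (S k) <= a k)%nat) /\
  (exists N, forall k, (N <= k)%nat -> a k = 0%nat).

Definition bipartition : Type := ((nat -> nat) * (nat -> nat))%type.
Definition bullet (l : bipartition) : nat -> nat := fst l.
Definition circ (l : bipartition) : nat -> nat := snd l.

Definition is_bipartition (l : bipartition) : Prop :=
  is_partition (bullet l) /\ is_partition (circ l).

Definition remove_one_box (a b : nat -> nat) : Prop :=
  exists i, a i = S (b i) /\ forall k, k <> i -> a k = b k.

Definition Rem_bullet (lam mu : bipartition) : Prop :=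
  is_bipartition mu /\ remove_one_box (bullet lam) (bullet mu) /\
  (forall k, circ mu k = circ lam k).
Definition Rem_circ (lam mu : bipartition) : Prop :=
  is_bipartition mu /\ remove_one_box (circ lam) (circ mu) /\
  (forall k, bullet mu k = bullet lam k).

(* I_wedge(lambda) = { lambda^bullet_i - (i-1) : i >= 1 }  (i = k+1) *)
Definition I_wedge (l : bipartition) (j : Z) : Prop :=
  exists k : nat, j = Z.of_nat (bullet l k) - Z.of_nat k.
(* I_vee(lambda, delta) = { i - delta - lambda^circ_i : i >= 1 }  (i = k+1) *)
Definition I_vee (l : bipartition) (delta : Z) (j : Z) : Prop :=
  exists k : nat, j = Z.of_nat (S k) - delta - Z.of_nat (circ l k).

Inductive label : Type := LCirc | LWedge | LVee | LCross.

Definition weight (l : bipartition) (delta : Z) (j : Z) : label :=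
  if excluded_middle_informative (I_wedge l j) then
    (if excluded_middle_informative (I_vee l delta j) then LCross else LWedge)
  else
    (if excluded_middle_informative (I_vee l delta j) then LVee else LCirc).

Definition differ_at_pair (lam mu : bipartition) (delta : Z)
    (cases : label -> label -> label -> label -> Prop) : Prop :=
  exists j : Z,
    (forall k : Z, k <> j -> k <> j + 1 -> weight mu delta k = weight lam delta k) /\
    cases (weight mu delta j) (weight mu delta (j + 1))
          (weight lam delta j) (weight lam delta (j + 1)).

Definition cases_bullet (m0 m1 l0 l1 : label) : Prop :=
  (m0 = LCross /\ m1 = LCirc /\ l0 = LVee /\ l1 = LWedge) \/
  (m0 = LWedge /\ m1 = LCirc /\ l0 = LCirc /\ l1 = LWedge) \/
  (m0 = LCross /\ m1 = LVee /\ l0 = LVee /\ l1 = LCross) \/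
  (m0 = LWedge /\ m1 = LVee /\ l0 = LCirc /\ l1 = LCross).

Definition cases_circ (m0 m1 l0 l1 : label) : Prop :=
  (m0 = LCirc /\ m1 = LCross /\ l0 = LVee /\ l1 = LWedge) \/
  (m0 = LCirc /\ m1 = LVee /\ l0 = LVee /\ l1 = LCirc) \/
  (m0 = LWedge /\ m1 = LCross /\ l0 = LCross /\ l1 = LWedge) \/
  (m0 = LWedge /\ m1 = LVee /\ l0 = LCross /\ l1 = LCirc).

(** The weight diagram records the two sets [I_wedge] and [I_vee], which are
    the ranges of the strictly decreasing "beta-number" sequences
    [lambda^bullet_k - k] and [delta + lambda^circ_k - k - 1] (the latter read
    with a sign change).  A strictly decreasing sequence is determined by its
    range, so removing a box from row [i] of [lambda^bullet] is the same as
    moving one point of [I_wedge] from [j+1] to [j] while [I_vee] stays put;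
    for [lambda^circ] a point of [I_vee] moves from [j] to [j+1].  The four
    label patterns of each case are exactly the four possible memberships of
    [j] and [j+1] in the set that does not move. *)

From Stdlib Require Import ZArith Lia Classical ClassicalEpsilon.
Open Scope Z_scope.

Definition strictly_decreasing (f : nat -> Z) : Prop := forall k, f (S k) < f k.

Definition range (f : nat -> Z) (z : Z) : Prop := exists k, z = f k.

Section StrictlyDecreasing.

Variable f : nat -> Z.
Hypothesis f_sdec : strictly_decreasing f.

Lemma strictly_decreasing_lt m n : (m < n)%nat -> f n < f m.
Proof.
  induction n as [|n IHn]; intros Hmn; [lia|].
  specialize (f_sdec n); destruct (Nat.eq_dec m n) as [->|]; [lia|].
  specialize (IHn ltac:(lia)); lia.
Qed.

Lemma strictly_decreasing_inj m n : f m = f n -> m = n.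
Proof.
  intros E; destruct (lt_eq_lt_dec m n) as [[Hmn|]|Hnm]; auto.
  - pose proof (strictly_decreasing_lt _ _ Hmn); lia.
  - pose proof (strictly_decreasing_lt _ _ Hnm); lia.
Qed.

End StrictlyDecreasing.

Lemma strictly_decreasing_range_le f g k :
  strictly_decreasing f -> strictly_decreasing g ->
  (forall m, (m < k)%nat -> f m = g m) -> range g (f k) -> f k <= g k.
Proof.
  intros Hf Hg Hagree [m Hm].
  destruct (lt_eq_lt_dec m k) as [[Hmk| <-]|Hkm]; [|lia|].
  - rewrite <- Hagree in Hm by exact Hmk.
    apply (strictly_decreasing_inj f Hf) in Hm; lia.
  - pose proof (strictly_decreasing_lt g Hg k m Hkm); lia.
Qed.

Lemma strictly_decreasing_eq_of_range f g :
  strictly_decreasing f -> strictly_decreasing g ->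
  (forall z, range f z <-> range g z) -> forall k, f k = g k.
Proof.
  intros Hf Hg Hrange k; induction k as [k IHk] using lt_wf_ind.
  assert (f k <= g k).
  { apply strictly_decreasing_range_le; auto.
    apply Hrange; exists k; reflexivity. }
  assert (g k <= f k).
  { apply strictly_decreasing_range_le; auto.
    - intros m Hm; symmetry; auto.
    - apply Hrange; exists k; reflexivity. }
  lia.
Qed.

Definition decrement (f g : nat -> Z) : Prop :=
  exists i, f i = g i + 1 /\ forall k, k <> i -> f k = g k.

Definition moves (P Q : Z -> Prop) (s d : Z) : Prop :=
  P s /\ ~ P d /\ Q d /\ ~ Q s /\ forall z, z <> s -> z <> d -> (Q z <-> P z).

Lemma moves_opp (P Q P' Q' : Z -> Prop) s d :
  (forall z, P z <-> P' (- z)) -> (forall z, Q z <-> Q' (- z)) ->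
  moves P Q s d <-> moves P' Q' (- s) (- d).
Proof.
  intros HP HQ; unfold moves; rewrite !HP, !HQ.
  split; intros (Hs & Hd & HQd & HQs & Hoff); do 4 (split; [assumption|]).
  - intros w Hws Hwd; rewrite <- (Z.opp_involutive w), <- HP, <- HQ.
    apply Hoff; lia.
  - intros w Hws Hwd; rewrite HP, HQ; apply Hoff; lia.
Qed.

Section Decrement.

Variables f g : nat -> Z.
Hypothesis f_sdec : strictly_decreasing f.
Hypothesis g_sdec : strictly_decreasing g.

Lemma decrement_moves : decrement f g -> exists j, moves (range f) (range g) (j + 1) j.
Proof.
  intros [i [Hi Hoff]]; exists (g i).
  assert (Hbefore : forall k, (k < i)%nat -> g i + 1 < f k).
  { intros k Hk; pose proof (strictly_decreasing_lt f f_sdec k i Hk); lia. }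
  assert (Hafter : forall k, (i < k)%nat -> f k < g i).
  { intros k Hk; rewrite Hoff by lia.
    exact (strictly_decreasing_lt g g_sdec i k Hk). }
  split; [|split; [|split; [|split]]].
  - exists i; lia.
  - intros [k Hk]; destruct (lt_eq_lt_dec k i) as [[Hki| ->]|Hik].
    + specialize (Hbefore k Hki); lia.
    + lia.
    + specialize (Hafter k Hik); lia.
  - exists i; reflexivity.
  - intros [k Hk]; destruct (lt_eq_lt_dec k i) as [[Hki| ->]|Hik].
    + specialize (Hbefore k Hki); rewrite <- (Hoff k) in Hk by lia; lia.
    + lia.
    + pose proof (strictly_decreasing_lt g g_sdec i k Hik); lia.
  - intros z Hz1 Hz0; split; intros [k ->].
    + assert (k <> i) by (intros ->; lia).
      exists k; symmetry; auto.
    + assert (k <> i) by (intros ->; lia).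
      exists k; auto.
Qed.

Lemma moves_decrement j : moves (range f) (range g) (j + 1) j -> decrement f g.
Proof.
  intros ([i Hi] & Hj & Hgj & Hgj1 & Hoff).
  set (f' := fun k => if Nat.eq_dec k i then j else f k).
  assert (Hf'_sdec : strictly_decreasing f').
  { intros k; unfold f'; pose proof (f_sdec k).
    destruct (Nat.eq_dec (S k) i), (Nat.eq_dec k i); subst; try lia.
    assert (f (S i) <> j) by (intros E; apply Hj; exists (S i); auto).
    lia. }
  assert (Hrange : forall z, range f' z <-> range g z).
  { intros z; unfold f'.
    destruct (Z.eq_dec z j) as [->|Hzj].
    { split; [auto|intros _; exists i; destruct (Nat.eq_dec i i); tauto]. }
    destruct (Z.eq_dec z (j + 1)) as [->|Hzj1].
    { split; [|tauto]; intros [k Hk].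
      destruct (Nat.eq_dec k i) as [|Hki]; [lia|].
      exfalso; apply Hki, (strictly_decreasing_inj f f_sdec); lia. }
    rewrite Hoff by assumption; split; intros [k ->].
    - destruct (Nat.eq_dec k i); [lia|]; exists k; reflexivity.
    - exists k; destruct (Nat.eq_dec k i); [subst; lia|reflexivity]. }
  pose proof (strictly_decreasing_eq_of_range f' g Hf'_sdec g_sdec Hrange) as E.
  exists i; split.
  - rewrite <- E; unfold f'; destruct (Nat.eq_dec i i); lia.
  - intros k Hk; rewrite <- E; unfold f'; destruct (Nat.eq_dec k i); tauto.
Qed.

Lemma decrement_iff_moves :
  decrement f g <-> exists j, moves (range f) (range g) (j + 1) j.
Proof.
  split; [exact decrement_moves|intros [j Hj]; exact (moves_decrement j Hj)].
Qed.

End Decrement.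

Definition shifted (a : nat -> nat) (c : nat -> Z) (k : nat) : Z :=
  Z.of_nat (a k) + c k.

Section Shifted.

Variable c : nat -> Z.
Hypothesis c_sdec : strictly_decreasing c.

Lemma shifted_strictly_decreasing a :
  is_partition a -> strictly_decreasing (shifted a c).
Proof.
  intros [Ha _] k; unfold shifted; specialize (Ha k); specialize (c_sdec k); lia.
Qed.

Lemma remove_one_box_iff_decrement a b :
  remove_one_box a b <-> decrement (shifted a c) (shifted b c).
Proof.
  unfold remove_one_box, decrement, shifted; split; intros [i [Hi Hoff]];
    exists i; split; try lia; intros k Hk; specialize (Hoff k Hk); lia.
Qed.

Lemma shifted_eq_of_range a b :
  is_partition a -> is_partition b ->
  (forall z, range (shifted a c) z <-> range (shifted b c) z) -> forall k, a k = b k.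
Proof.
  intros Ha Hb Hrange k.
  pose proof (strictly_decreasing_eq_of_range _ _
    (shifted_strictly_decreasing a Ha) (shifted_strictly_decreasing b Hb) Hrange k).
  unfold shifted in *; lia.
Qed.

End Shifted.

(** Chosen so that [I_wedge l] is convertible to
    [range (shifted (bullet l) wedge_shift)]. *)
Definition wedge_shift (k : nat) : Z := - Z.of_nat k.
Definition vee_shift (delta : Z) (k : nat) : Z := delta - Z.of_nat (S k).

Lemma wedge_shift_strictly_decreasing : strictly_decreasing wedge_shift.
Proof. intros k; unfold wedge_shift; lia. Qed.

Lemma vee_shift_strictly_decreasing delta : strictly_decreasing (vee_shift delta).
Proof. intros k; unfold vee_shift; lia. Qed.

Lemma I_vee_range l delta z :
  I_vee l delta z <-> range (shifted (circ l) (vee_shift delta)) (- z).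
Proof. unfold shifted, vee_shift; split; intros [k Hk]; exists k; lia. Qed.

Lemma Rem_bullet_iff (delta : Z) (lam mu : bipartition) :
  is_bipartition lam -> is_bipartition mu ->
  Rem_bullet lam mu <->
  (exists j, moves (I_wedge lam) (I_wedge mu) (j + 1) j) /\
  (forall z, I_vee mu delta z <-> I_vee lam delta z).
Proof.
  intros [Hlw Hlv] [Hmw Hmv].
  pose proof wedge_shift_strictly_decreasing as Hc.
  unfold Rem_bullet.
  rewrite (remove_one_box_iff_decrement wedge_shift),
    (decrement_iff_moves _ _ (shifted_strictly_decreasing _ Hc _ Hlw)
       (shifted_strictly_decreasing _ Hc _ Hmw)).
  split.
  - intros (_ & Hmoves & Hcirc); split; [exact Hmoves|].
    intros z; unfold I_vee; setoid_rewrite Hcirc; reflexivity.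
  - intros [Hmoves Hvee]; split; [split; assumption|split; [exact Hmoves|]].
    apply (shifted_eq_of_range (vee_shift delta) (vee_shift_strictly_decreasing delta));
      auto.
    intros z; rewrite <- (Z.opp_involutive z), <- !I_vee_range; auto.
Qed.

Lemma Rem_circ_iff (delta : Z) (lam mu : bipartition) :
  is_bipartition lam -> is_bipartition mu ->
  Rem_circ lam mu <->
  (exists j, moves (I_vee lam delta) (I_vee mu delta) j (j + 1)) /\
  (forall z, I_wedge mu z <-> I_wedge lam z).
Proof.
  intros [Hlw Hlv] [Hmw Hmv].
  pose proof (vee_shift_strictly_decreasing delta) as Hc.
  assert (Hmoves : forall j,
    moves (I_vee lam delta) (I_vee mu delta) j (j + 1) <->
    moves (range (shifted (circ lam) (vee_shift delta)))
          (range (shifted (circ mu) (vee_shift delta))) (- (j + 1) + 1) (- (j + 1))).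
  { intros j; replace (- (j + 1) + 1) with (- j) by lia.
    apply moves_opp; intros z; apply I_vee_range. }
  unfold Rem_circ.
  rewrite (remove_one_box_iff_decrement (vee_shift delta)),
    (decrement_iff_moves _ _ (shifted_strictly_decreasing _ Hc _ Hlv)
       (shifted_strictly_decreasing _ Hc _ Hmv)).
  split.
  - intros (_ & [j Hj] & Hbullet); split.
    + exists (- (j + 1)); apply Hmoves.
      replace (- (- (j + 1) + 1)) with j by lia; exact Hj.
    + intros z; unfold I_wedge; setoid_rewrite Hbullet; reflexivity.
  - intros [[j Hj] Hwedge]; split; [split; assumption|split].
    + exists (- (j + 1)); apply Hmoves, Hj.
    + exact (shifted_eq_of_range _ wedge_shift_strictly_decreasing _ _ Hmw Hlw Hwedge).
Qed.

(** [weight l delta j] is convertible to [label_of (I_wedge l j) (I_vee l delta j)]. *)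
Definition label_of (p q : Prop) : label :=
  if excluded_middle_informative p then
    (if excluded_middle_informative q then LCross else LWedge)
  else
    (if excluded_middle_informative q then LVee else LCirc).

Lemma label_of_eq_iff p q p' q' :
  label_of p q = label_of p' q' <-> (p <-> p') /\ (q <-> q').
Proof.
  unfold label_of.
  destruct (excluded_middle_informative p), (excluded_middle_informative q),
    (excluded_middle_informative p'), (excluded_middle_informative q');
    split; intros; try discriminate; tauto.
Qed.

Lemma label_of_LCross p q : label_of p q = LCross <-> p /\ q.
Proof.
  unfold label_of; destruct (excluded_middle_informative p),
    (excluded_middle_informative q); split; intros; try discriminate; tauto.
Qed.

Lemma label_of_LWedge p q : label_of p q = LWedge <-> p /\ ~ q.
Proof.
  unfold label_of; destruct (excluded_middle_informative p),
    (excluded_middle_informative q); split; intros; try discriminate; tauto.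
Qed.

Lemma label_of_LVee p q : label_of p q = LVee <-> ~ p /\ q.
Proof.
  unfold label_of; destruct (excluded_middle_informative p),
    (excluded_middle_informative q); split; intros; try discriminate; tauto.
Qed.

Lemma label_of_LCirc p q : label_of p q = LCirc <-> ~ p /\ ~ q.
Proof.
  unfold label_of; destruct (excluded_middle_informative p),
    (excluded_middle_informative q); split; intros; try discriminate; tauto.
Qed.

Lemma cases_bullet_label_of pm0 qm0 pm1 qm1 pl0 ql0 pl1 ql1 :
  cases_bullet (label_of pm0 qm0) (label_of pm1 qm1)
               (label_of pl0 ql0) (label_of pl1 ql1) <->
  pm0 /\ ~ pm1 /\ ~ pl0 /\ pl1 /\ (qm0 <-> ql0) /\ (qm1 <-> ql1).
Proof.
  unfold cases_bullet.
  rewrite !label_of_LCross, !label_of_LWedge, !label_of_LVee, !label_of_LCirc.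
  split; [tauto|destruct (classic ql0), (classic ql1); tauto].
Qed.

Lemma cases_circ_label_of pm0 qm0 pm1 qm1 pl0 ql0 pl1 ql1 :
  cases_circ (label_of pm0 qm0) (label_of pm1 qm1)
             (label_of pl0 ql0) (label_of pl1 ql1) <->
  ~ qm0 /\ qm1 /\ ql0 /\ ~ ql1 /\ (pm0 <-> pl0) /\ (pm1 <-> pl1).
Proof.
  unfold cases_circ.
  rewrite !label_of_LCross, !label_of_LWedge, !label_of_LVee, !label_of_LCirc.
  split; [tauto|destruct (classic pl0), (classic pl1); tauto].
Qed.

Lemma label_pair_bullet (Pl Ql Pm Qm : Z -> Prop) j :
  ((forall k, k <> j -> k <> j + 1 -> label_of (Pm k) (Qm k) = label_of (Pl k) (Ql k)) /\
   cases_bullet (label_of (Pm j) (Qm j)) (label_of (Pm (j + 1)) (Qm (j + 1)))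
                (label_of (Pl j) (Ql j)) (label_of (Pl (j + 1)) (Ql (j + 1)))) <->
  moves Pl Pm (j + 1) j /\ (forall z, Qm z <-> Ql z).
Proof.
  rewrite cases_bullet_label_of; unfold moves; setoid_rewrite label_of_eq_iff.
  split.
  - intros (Hoff & Hm0 & Hm1 & Hl0 & Hl1 & Hq0 & Hq1).
    split; [do 4 (split; [assumption|])|].
    + intros z Hz1 Hz0; apply Hoff; assumption.
    + intros z; destruct (Z.eq_dec z j) as [->|Hz0]; [assumption|].
      destruct (Z.eq_dec z (j + 1)) as [->|Hz1]; [assumption|].
      apply Hoff; assumption.
  - intros ((Hl1 & Hl0 & Hm0 & Hm1 & Hoff) & HQ).
    pose proof (HQ j); pose proof (HQ (j + 1)).
    split; [|tauto]; intros k Hk0 Hk1; auto.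
Qed.

Lemma label_pair_circ (Pl Ql Pm Qm : Z -> Prop) j :
  ((forall k, k <> j -> k <> j + 1 -> label_of (Pm k) (Qm k) = label_of (Pl k) (Ql k)) /\
   cases_circ (label_of (Pm j) (Qm j)) (label_of (Pm (j + 1)) (Qm (j + 1)))
              (label_of (Pl j) (Ql j)) (label_of (Pl (j + 1)) (Ql (j + 1)))) <->
  moves Ql Qm j (j + 1) /\ (forall z, Pm z <-> Pl z).
Proof.
  rewrite cases_circ_label_of; unfold moves; setoid_rewrite label_of_eq_iff.
  split.
  - intros (Hoff & Hm0 & Hm1 & Hl0 & Hl1 & Hp0 & Hp1).
    split; [do 4 (split; [assumption|])|].
    + intros z Hz0 Hz1; apply Hoff; assumption.
    + intros z; destruct (Z.eq_dec z j) as [->|Hz0]; [assumption|].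
      destruct (Z.eq_dec z (j + 1)) as [->|Hz1]; [assumption|].
      apply Hoff; assumption.
  - intros ((Hl0 & Hl1 & Hm1 & Hm0 & Hoff) & HP).
    pose proof (HP j); pose proof (HP (j + 1)).
    split; [|tauto]; intros k Hk0 Hk1; auto.
Qed.

Lemma differ_at_pair_bullet_iff (delta : Z) (lam mu : bipartition) :
  differ_at_pair lam mu delta cases_bullet <->
  exists j, moves (I_wedge lam) (I_wedge mu) (j + 1) j /\
            (forall z, I_vee mu delta z <-> I_vee lam delta z).
Proof.
  pose proof (label_pair_bullet (I_wedge lam) (I_vee lam delta)
                (I_wedge mu) (I_vee mu delta)) as Hpair.
  split; intros [j Hj]; exists j; apply Hpair, Hj.
Qed.

Lemma differ_at_pair_circ_iff (delta : Z) (lam mu : bipartition) :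
  differ_at_pair lam mu delta cases_circ <->
  exists j, moves (I_vee lam delta) (I_vee mu delta) j (j + 1) /\
            (forall z, I_wedge mu z <-> I_wedge lam z).
Proof.
  pose proof (label_pair_circ (I_wedge lam) (I_vee lam delta)
                (I_wedge mu) (I_vee mu delta)) as Hpair.
  split; intros [j Hj]; exists j; apply Hpair, Hj.
Qed.

Theorem proposition2p1 (delta : Z) (lam mu : bipartition) :
  is_bipartition lam -> is_bipartition mu ->
  (Rem_bullet lam mu <-> differ_at_pair lam mu delta cases_bullet) /\
  (Rem_circ lam mu <-> differ_at_pair lam mu delta cases_circ).
Proof.
  intros Hlam Hmu; split.
  - rewrite (Rem_bullet_iff delta lam mu Hlam Hmu), differ_at_pair_bullet_iff.
    firstorder.
  - rewrite (Rem_circ_iff delta lam mu Hlam Hmu), differ_at_pair_circ_iff.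
    firstorder.
Qed.
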